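(* Let $T^+=\mathbb{Z}^+$ or $\mathbb{R}^+$ act on a compact metrizable space $X$ by continuous surjections $\alpha^t$. Then the adherence semigroup $\mathcal A^+$ contains the kernel $\mathcal M^+$ of $E^+$.
   Context: $\alpha^{s+t}=\alpha^s\circ\alpha^t$, $\alpha^0=\mathrm{id}$. $E^+=E(X,T^+)$ is the closure of $\{\alpha^t:t\in T^+\}$ in $X^X$ (pointwise convergence topology, composition); its kernel $\mathcal M^+$ is its unique minimal two-sided ideal. $\mathcal A^+$ is the set of elements of $E^+$ that are pointwise limits of nets $(\alpha^{t_\nu})$ with $\lim t_\nu=+\infty$ (equivalently $\bigcap_{t\in T^+}\alpha^tE^+$). *)

From HB Require Import structures.
From mathcomp Require Import all_boot all_order all_algebra.
From mathcomp Require Import all_classical all_reals all_analysis.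
Set Implicit Arguments. Unset Strict Implicit. Unset Printing Implicit Defensive.
Import Order.TTheory GRing.Theory Num.Theory.
Local Open Scope classical_set_scope.

Definition is_cont_surj_action {T : Type} (add : T -> T -> T) (zero : T)
    (S : set T) {X : topologicalType} (alpha : T -> X -> X) : Prop :=
  [/\ alpha zero = id,
      (forall s t, S s -> S t -> alpha (add s t) = alpha s \o alpha t),
      (forall t, S t -> continuous (alpha t)) &
      (forall t, S t -> forall y, exists x, alpha t x = y)].

Definition enveloping {T : Type} (S : set T) {X : topologicalType}
    (alpha : T -> X -> X) : set (X -> X) :=
  closure ((alpha @` S) : set {ptws X -> X}).

Definition two_sided_ideal {X : Type} (E I : set (X -> X)) : Prop :=
  [/\ I !=set0, I `<=` E,
      (forall f g, E f -> I g -> I (f \o g)) &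
      (forall f g, I f -> E g -> I (f \o g))].

Definition minimal_ideal {X : Type} (E M : set (X -> X)) : Prop :=
  two_sided_ideal E M /\
  (forall I, two_sided_ideal E I -> I `<=` M -> I = M).

(* Adherence semigroup A^+ = \bigcap_{t in S} alpha^t E^+. *)
Definition adherence {T : Type} (S : set T) {X : topologicalType}
    (alpha : T -> X -> X) : set (X -> X) :=
  [set f | forall t, S t -> exists2 g, enveloping S alpha g & f = alpha t \o g].

(* Each alpha^t is central in E^+: it commutes with every alpha^s, and by
   continuity of alpha^t the commutation passes to pointwise limits.  Hence
   alpha^t M^+ is a two-sided ideal of E^+ contained in M^+, so by minimality
   M^+ = alpha^t M^+ for every t, i.e. M^+ lies in every alpha^t E^+. *)

From HB Require Import structures.
From mathcomp Require Import all_boot all_order all_algebra.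
From mathcomp Require Import all_classical all_reals all_analysis.
Import Order.TTheory GRing.Theory Num.Theory.
Local Open Scope classical_set_scope.
Local Open Scope ring_scope.

Lemma ptws_closure_commute {X : topologicalType} (hX : hausdorff_space X)
    {c : X -> X} (cc : continuous c) (A : set {ptws X -> X}) :
  (forall g, A g -> g \o c = c \o g) ->
  closure A `<=` [set f : X -> X | f \o c = c \o f].
Proof.
move=> Ac f Af; apply: funext => x /=.
apply: hX => U V nU nV.
have nU' : nbhs f [set g : {ptws X -> X} | U (g (c x))].
  exact: (@proj_continuous X (fun _ => X) (c x) f U nU).
have nV' : nbhs f [set g : {ptws X -> X} | V (c (g x))].
  exact: (@proj_continuous X (fun _ => X) x f (c @^-1` V) (cc (f x) V nV)).
have [g [Ag [Ug Vg]]] := Af _ (filterI nU' nV').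
by exists (g (c x)); split; rewrite // -[g (c x)]/((g \o c) x) Ac.
Qed.

Lemma enveloping_commute {T : Type} {add : T -> T -> T} {zero : T} {S : set T}
    {X : topologicalType} (hX : hausdorff_space X) {alpha : T -> X -> X}
    (addC : forall s t, add s t = add t s) :
  is_cont_surj_action add zero S alpha ->
  forall t, S t -> forall f, enveloping S alpha f -> f \o alpha t = alpha t \o f.
Proof.
case=> _ hadd hc _ t St f.
apply: (ptws_closure_commute hX (hc t St)) => _ [s Ss <-].
by rewrite -!hadd // addC.
Qed.

Lemma minimal_ideal_central_comp {X : Type} {E M : set (X -> X)} {c : X -> X} :
  minimal_ideal E M -> E c -> (forall f, E f -> f \o c = c \o f) ->
  M `<=` [set c \o m | m in M].
Proof.
case=> [[[m0 Mm0] ME ML MR] Mmin] Ec central.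
pose cM := [set c \o m | m in M].
have cM_ideal : two_sided_ideal E cM.
  split.
  - by exists (c \o m0); exists m0.
  - by move=> _ [m Mm <-]; apply/ME/ML.
  - move=> g _ Eg [m Mm <-]; exists (g \o m); first exact: ML.
    by rewrite compA -central.
  - by move=> _ g [m Mm <-] Eg; exists (m \o g); [exact: MR | rewrite compA].
have cM_sub : cM `<=` M by move=> _ [m Mm <-]; exact: ML.
by rewrite -{1}(Mmin cM cM_ideal cM_sub).
Qed.

Lemma minimal_ideal_sub_adherence {T : Type} {add : T -> T -> T} {zero : T}
    {S : set T} {X : topologicalType} (hX : hausdorff_space X)
    {alpha : T -> X -> X} (addC : forall s t, add s t = add t s) :
  is_cont_surj_action add zero S alpha ->
  forall M, minimal_ideal (enveloping S alpha) M -> M `<=` adherence S alpha.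
Proof.
move=> act M Mmin f Mf t St.
have Et : enveloping S alpha (alpha t) by apply: subset_closure; exists t.
have [m Mm <-] := minimal_ideal_central_comp Mmin Et
  (enveloping_commute hX addC act _ St) _ Mf.
by case: Mmin => -[_ ME _ _] _; exists m => //; exact: ME.
Qed.

Theorem lemma4p3 (R : realType) (X : pseudoMetricType R)
    (hX : hausdorff_space X) (cX : compact [set: X]) :
  (* case T^+ = Z^+ *)
  (forall alpha : nat -> X -> X,
     is_cont_surj_action addn 0%N [set: nat] alpha ->
     forall M, minimal_ideal (enveloping [set: nat] alpha) M ->
       M `<=` adherence [set: nat] alpha) /\
  (* case T^+ = R^+ *)
  (forall alpha : R -> X -> X,
     is_cont_surj_action +%R 0 [set t : R | 0 <= t] alpha ->
     forall M, minimal_ideal (enveloping [set t : R | 0 <= t] alpha) M ->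
       M `<=` adherence [set t : R | 0 <= t] alpha).
Proof.
split=> alpha act.
- exact: (minimal_ideal_sub_adherence hX addnC act).
- exact: (minimal_ideal_sub_adherence hX (@addrC R) act).
Qed.
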